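(* Assume $f$ has a unique global maximizer, contains no weak epistasis, and every order-1 epistasis of $f$ is strict. Then every directed cycle of the epistatic graph lies in a clique: if $v_0\rightarrow v_1\rightarrow\cdots\rightarrow v_{c-1}\rightarrow v_0$ is a directed cycle, then $v_a\rightarrow v_b$ for all distinct $a,b\in\{0,\dots,c-1\}$.
   Context: Fix $\ell\ge1$, loci $V=\{0,\dots,\ell-1\}$, chromosomes $\vec y\in\{0,1\}^V$, fitness $f:\{0,1\}^V\to\mathbb R$ (maximized) with unique global maximizer $g$. An assignment $A$ is a set of pairs $(v,a)$ with at most one pair per locus; coverage $\mathcal C(A)$; $A[v]$ its allele at $v$. $\Psi_A$ is the set of chromosomes agreeing with $A$ on $\mathcal C(A)$ with maximum fitness among such chromosomes; $\Psi_A[v]=\{\psi_v:\psi\in\Psi_A\}$. Epistasis: for $v\in V$ and nonempty $S\subseteq V\setminus\{v\}$, $S\Rightarrow v$ iff for every $s\in S$ there exists an assignment $A$ with $\mathcal C(A)=S$ and $\Psi_A[v]\neq\Psi_{A\setminus\{(s,A[s])\}}[v]$. An epistasis $S\Rightarrow v$ with $|S|\ge2$ is weak if no nonempty proper subset $T\subsetneq S$ has $T\Rightarrow v$. An order-1 epistasis $\{u\}\Rightarrow v$ is strict, written $u\rightarrow v$, if $\Psi_{\{(u,1-g[u])\}}[v]=\{1-g[v]\}$. The epistatic graph is the directed graph on $V$ with edge $u\to v$ iff $\{u\}\Rightarrow v$. A clique is a set of vertices $C$ with $a\rightarrow b$ for all distinct $a,b\in C$. *)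

From mathcomp Require Import all_boot all_order all_algebra.
Set Implicit Arguments. Unset Strict Implicit. Unset Printing Implicit Defensive.
Import Order.TTheory GRing.Theory Num.Theory.
Local Open Scope ring_scope.

(* Loci V = 'I_l ; chromosomes in {0,1}^V encoded as boolean finite functions
   (true = allele 1, false = allele 0). *)
Definition chrom (l : nat) := {ffun 'I_l -> bool}.

(* An assignment: at most one allele per locus; None = locus not covered. *)
Definition assignment (l : nat) := {ffun 'I_l -> option bool}.

Section Epistasis.
Variables (R : realDomainType) (l : nat) (f : chrom l -> R).

Definition coverage (A : assignment l) : {set 'I_l} :=
  [set v | A v != None].

Definition agrees (A : assignment l) (y : chrom l) : bool :=
  [forall v, if A v is Some a then y v == a else true].

Definition Psi (A : assignment l) : {set chrom l} :=
  [set y | agrees A y && [forall z : chrom l, agrees A z ==> (f z <= f y)]].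

Definition Psi_at (A : assignment l) (v : 'I_l) : {set bool} :=
  [set (y : chrom l) v | y in Psi A].

Definition remove_locus (A : assignment l) (s : 'I_l) : assignment l :=
  [ffun w => if w == s then None else A w].

Definition epistasis (S : {set 'I_l}) (v : 'I_l) : Prop :=
  S != set0 /\ v \notin S /\
  forall s, s \in S ->
    exists A : assignment l,
      coverage A = S /\ Psi_at A v != Psi_at (remove_locus A s) v.

Definition weak_epistasis (S : {set 'I_l}) (v : 'I_l) : Prop :=
  epistasis S v /\ (2 <= #|S|)%N /\
  forall T : {set 'I_l}, T != set0 -> T \proper S -> ~ epistasis T v.

Definition single (u : 'I_l) (a : bool) : assignment l :=
  [ffun w => if w == u then Some a else None].

(* strict order-1 epistasis u -> v, relative to the global maximizer g *)
Definition strict_epi (g : chrom l) (u v : 'I_l) : Prop :=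
  epistasis [set u] v /\ Psi_at (single u (~~ g u)) v = [set ~~ g v].

Definition epi_edge (u v : 'I_l) : Prop := epistasis [set u] v.

End Epistasis.

(* Let N_i be the assignment setting locus v_i to its non-optimal allele. Strictness of
   v_i -> v_(i+1) says every best chromosome under N_i already satisfies N_(i+1), so the
   best fitness under N_(i+1) is at least that under N_i. Around the cycle these values
   must all be equal, and then a best chromosome under N_a is best under every N_i; in
   particular it carries the non-optimal allele at every v_b. Without any constraint the
   unique best chromosome is g itself, so fixing v_a changes the optimal allele at v_b:
   this is the strict epistasis v_a -> v_b. *)
From mathcomp Require Import all_boot all_order all_algebra.
Import Order.TTheory GRing.Theory Num.Theory.
Local Open Scope ring_scope.
Set Implicit Arguments. Unset Strict Implicit.

Lemma iter_ordS_val c k (i : 'I_c) : val (iter k (@ordS c) i) = ((i + k) %% c)%N.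
Proof.
elim: k => [|k IH] /=; first by rewrite addn0 modn_small.
by rewrite IH addnS -[((i + k) %% c).+1]addn1 -[(i + k).+1]addn1 modnDml.
Qed.

Lemma iter_ordS_onto c (i j : 'I_c) : exists k, iter k (@ordS c) i = j.
Proof.
exists (j + (c - i))%N; apply: val_inj; rewrite iter_ordS_val /=.
rewrite addnCA subnKC ?(ltnW (ltn_ord i)) //.
by rewrite -modnDmr modnn addn0 modn_small.
Qed.

Lemma ordS_ind c (P : 'I_c -> Prop) :
  (forall i, P i -> P (ordS i)) -> forall i j, P i -> P j.
Proof.
move=> PS i j Pi; have [k <-] := iter_ordS_onto i j.
by elim: k => //= k; apply: PS.
Qed.

Section Psi.
Variables (R : realDomainType) (l : nat) (f : chrom l -> R).

Lemma agrees_single (y : chrom l) (u : 'I_l) a : agrees (single u a) y = (y u == a).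
Proof.
apply/forallP/eqP; first by move/(_ u); rewrite ffunE eqxx => /eqP.
by move=> <- v; rewrite ffunE; case: eqP => // ->.
Qed.

Lemma PsiP A y :
  reflect (agrees A y /\ forall z, agrees A z -> f z <= f y) (y \in Psi f A).
Proof.
rewrite inE; apply: (iffP andP) => -[Ay maxy]; split=> //.
  by move=> z Az; exact: (implyP (forallP maxy z) Az).
by apply/forallP => z; apply/implyP; exact: maxy.
Qed.

Lemma Psi_le B y z : agrees B y -> z \in Psi f B -> f y <= f z.
Proof. by move=> By /PsiP[_ maxz]; exact: maxz. Qed.

Lemma remove_single (u : 'I_l) a : remove_locus (single u a) u = [ffun _ => None].
Proof. by apply/ffunP => w; rewrite !ffunE; case: eqP. Qed.

Lemma Psi_at_unconstrained (g : chrom l) v :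
  (forall y, y != g -> f y < f g) -> g v \in Psi_at f [ffun _ => None] v.
Proof.
move=> gmax; apply/imsetP; exists g => //; apply/PsiP; split.
  by apply/forallP => w; rewrite ffunE.
by move=> z _; case: (eqVneq z g) => [-> // | /gmax/ltW].
Qed.

Section Cycle.
Variables (c : nat) (N : 'I_c -> assignment l).
Hypothesis Psi_nonempty : forall i, exists y, y \in Psi f (N i).
Hypothesis Psi_agrees_next :
  forall i y, y \in Psi f (N i) -> agrees (N (ordS i)) y.

Lemma Psi_cycle_sub i j y : y \in Psi f (N i) -> y \in Psi f (N j).
Proof.
pose best k := odflt y [pick z in Psi f (N k)].
have bestP k : best k \in Psi f (N k).
  rewrite /best; case: pickP => [z //|none].
  by have [z] := Psi_nonempty k; rewrite none.
have best_le k k' : f (best k) <= f (best k').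
  apply: (@ordS_ind c (fun k' => f (best k) <= f (best k'))) => // m le_km.
  by apply: le_trans le_km (Psi_le (Psi_agrees_next (bestP m)) (bestP _)).
apply: (@ordS_ind c (fun k => y \in Psi f (N k))) => m /[dup] ym /PsiP[Ny maxy].
apply/PsiP; split; first exact: Psi_agrees_next.
move=> z z_next; have /PsiP[_ maxb] := bestP (ordS m).
have /PsiP[Nbm _] := bestP m.
by apply: le_trans (maxb z z_next) (le_trans (best_le _ m) (maxy _ Nbm)).
Qed.

End Cycle.

Section Strict.
Variable g : chrom l.

Lemma strict_epi_Psi u v y :
  strict_epi f g u v -> y \in Psi f (single u (~~ g u)) -> y v = ~~ g v.
Proof.
move=> [_ Psi_v] Py; apply/eqP.
by rewrite -in_set1 -Psi_v; apply/imsetP; exists y.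
Qed.

Lemma strict_epi_Psi_nonempty u v :
  strict_epi f g u v -> exists y, y \in Psi f (single u (~~ g u)).
Proof.
move=> [_ Psi_v].
have : ~~ g v \in Psi_at f (single u (~~ g u)) v by rewrite Psi_v set11.
by case/imsetP => y Py _; exists y.
Qed.

Lemma strict_epiI u v :
  (forall y, y != g -> f y < f g) -> u != v ->
  (forall y, y \in Psi f (single u (~~ g u)) -> y v = ~~ g v) ->
  (exists y, y \in Psi f (single u (~~ g u))) ->
  strict_epi f g u v.
Proof.
move=> gmax neq_uv Psi_v [y0 Py0].
have Psi_at_v : Psi_at f (single u (~~ g u)) v = [set ~~ g v].
  apply/setP => a; rewrite in_set1; apply/imsetP/eqP => [[y Py ->] | ->].
    exact: Psi_v.
  by exists y0; last rewrite (Psi_v y0 Py0).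
split=> //; split; first by apply/set0Pn; exists u; rewrite set11.
split; first by rewrite in_set1 eq_sym.
move=> s; rewrite in_set1 => /eqP ->.
exists (single u (~~ g u)); split.
  by apply/setP => w; rewrite !inE ffunE; case: (w == u).
rewrite Psi_at_v remove_single; apply/eqP => /setP/(_ (g v)).
by rewrite (Psi_at_unconstrained _ gmax) in_set1; case: (g v).
Qed.

End Strict.

End Psi.

Theorem lemma7 (R : realDomainType) (l : nat) (f : chrom l -> R) (g : chrom l)
  (hl : (0 < l)%N)
  (hg : forall y : chrom l, y != g -> f y < f g)
  (hnoweak : forall (S : {set 'I_l}) (v : 'I_l), ~ weak_epistasis f S v)
  (hstrict : forall u v : 'I_l, epistasis f [set u] v -> strict_epi f g u v)
  (c : nat) (cyc : 'I_c -> 'I_l) (hinj : injective cyc)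
  (hcyc : forall i : 'I_c, epi_edge f (cyc i) (cyc (ordS i))) :
  forall a b : 'I_c, a != b -> strict_epi f g (cyc a) (cyc b).
Proof.
move=> a b neq_ab.
pose N i := single (cyc i) (~~ g (cyc i)).
have edge_strict i := hstrict _ _ (hcyc i).
have Psi_sub : forall i j y, y \in Psi f (N i) -> y \in Psi f (N j).
  apply: Psi_cycle_sub => [i | i y Py].
    exact: strict_epi_Psi_nonempty (edge_strict i).
  by rewrite agrees_single (strict_epi_Psi (edge_strict i) Py).
apply: strict_epiI => //.
- by apply: contra neq_ab => /eqP /hinj ->.
- move=> y /(Psi_sub a b) /PsiP[].
  by rewrite agrees_single => /eqP.
- exact: strict_epi_Psi_nonempty (edge_strict a).
Qed.
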